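(* In the setting of the context, regard the error exponent $K=K(a)$ as a function of $a\in[0,1]$ with $\Pi_0,\sigma^2$ fixed. If $\Gamma=\Pi_0/\sigma^2<1$, then there exists $a_m\in(0,1)$ at which $K$ attains its maximum over $[0,1]$, and $a_m$ is a solution of the equation $$[1+a^2+\Gamma(1-a^2)]^2-2\Big(r_e+\frac{a^4}{r_e}\Big)=0,\qquad r_e=R_e/\sigma^2,$$ where $R_e=P+\sigma^2$ with $P=\frac{\sqrt{[\sigma^2(1-a^2)-Q]^2+4\sigma^2Q}-\sigma^2(1-a^2)+Q}{2}$ and $Q=\Pi_0(1-a^2)$. Moreover, $a_m\to1$ as $\Gamma\to0$. Consequently, for the sampled diffusion with $a=e^{-A\Delta}$ ($A>0$), the optimal sensor spacing is $\Delta^*=-\log(a_m)/A$.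
   Context: Model: fix $a\in[0,1]$, $\Pi_0>0$, $\sigma^2>0$. The signal is a stationary Gaussian first-order autoregressive sequence $s_{i+1}=a s_i+u_i$, $i\ge1$, with $s_1\sim\mathcal N(0,\Pi_0)$ and $u_i$ i.i.d. $\mathcal N(0,Q)$, $Q=\Pi_0(1-a^2)$, independent of $s_1$. Observations follow $H_0: y_i=w_i$ or $H_1: y_i=s_i+w_i$, $w_i$ i.i.d. $\mathcal N(0,\sigma^2)$ independent of the signal; $\Gamma=\Pi_0/\sigma^2$ is the SNR. In the sensor application the samples come from a stationary diffusion $ds/dx=-As(x)+Bu(x)$ sampled at spacing $\Delta$, giving $a=e^{-A\Delta}$. The error exponent $K$ is $-\lim_{n\to\infty}\frac1n\log P_M(n)$, where $P_M(n)$ is the miss probability of the level-$\alpha$ Neyman–Pearson detector based on $y_1,\dots,y_n$ (independent of $\alpha\in(0,1)$); explicitly $K=\frac{1}{2\pi}\int_0^{2\pi} D(\mathcal N(0,\sigma^2)\|\mathcal N(0,S_y(\omega)))\,d\omega$ with $S_y(\omega)=\sigma^2+\frac{\Pi_0(1-a^2)}{1-2a\cos\omega+a^2}$, $D$ the Kullback–Leibler divergence. *)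

From Stdlib Require Import Reals.
From Coquelicot Require Import Coquelicot.
Open Scope R_scope.

(* Power spectral density of y under H1:
   S_y(w) = sigma2 + Pi0 (1-a^2) / (1 - 2 a cos w + a^2). *)
Definition Sy (Pi0 sigma2 a w : R) : R :=
  sigma2 + Pi0 * (1 - a ^ 2) / (1 - 2 * a * cos w + a ^ 2).

(* Kullback-Leibler divergence D(N(0,s1) || N(0,s2)) between centred
   Gaussians with variances s1, s2 > 0. *)
Definition KL_gauss (s1 s2 : R) : R :=
  / 2 * (s1 / s2 - 1 - ln (s1 / s2)).

Definition Kexp (Pi0 sigma2 a : R) : R :=
  / (2 * PI) * RInt (fun w => KL_gauss sigma2 (Sy Pi0 sigma2 a w)) 0 (2 * PI).

Definition Qv (Pi0 a : R) : R := Pi0 * (1 - a ^ 2).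

Definition Pv (Pi0 sigma2 a : R) : R :=
  (sqrt ((sigma2 * (1 - a ^ 2) - Qv Pi0 a) ^ 2 + 4 * sigma2 * Qv Pi0 a)
   - sigma2 * (1 - a ^ 2) + Qv Pi0 a) / 2.

Definition Re_v (Pi0 sigma2 a : R) : R := Pv Pi0 sigma2 a + sigma2.
Definition re_v (Pi0 sigma2 a : R) : R := Re_v Pi0 sigma2 a / sigma2.

Definition opt_eq_lhs (Pi0 sigma2 a : R) : R :=
  (1 + a ^ 2 + (Pi0 / sigma2) * (1 - a ^ 2)) ^ 2
  - 2 * (re_v Pi0 sigma2 a + a ^ 4 / re_v Pi0 sigma2 a).

From Stdlib Require Import Reals Lra.
From Coquelicot Require Import Coquelicot.
Open Scope R_scope.

(* With g = Pi0 / sigma2, let c be the larger root of c + a^2 / c = 1 + a^2 + g (1 - a^2).  Then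
   S_y(w) / sigma2 = c |1 - (a/c) e^(iw)|^2 / |1 - a e^(iw)|^2, and the Poisson integral
   int dw / |1 - b e^(iw)|^2 = 2 PI / (1 - b^2) together with Jensen's formula
   int ln |1 - b e^(iw)|^2 dw = 0 (|b| < 1) give K in closed form as a function of c:
   K = (ln c - g (c - 1) / (1 + g - (1 - g) c)) / 2.  As a runs over [0, 1], c runs
   monotonically over [1, 1 + g], and K first increases and then decreases there, with
   its unique maximum where (1 + g - (1 - g) c)^2 = 2 g^2 c.  Rewritten in a, this
   stationarity condition is the stated optimality equation; as g -> 0 the maximiser c
   tends to 1, i.e. a_m tends to 1. *)

Section PeriodicIntegrals.

Variables (f : R -> R) (T : R).
Hypothesis f_cont : forall x, continuous f x.
Hypothesis f_periodic : forall x, f (x + T) = f x.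

Let ex_RInt_f a b : ex_RInt f a b.
Proof. apply (ex_RInt_continuous (V := R_CompleteNormedModule)); intros; apply f_cont. Qed.

Lemma RInt_comp_affine u v a b :
  RInt (fun y => u * f (u * y + v)) a b = RInt f (u * a + v) (u * b + v).
Proof. exact (RInt_comp_lin f u v a b (ex_RInt_f _ _)). Qed.

Lemma RInt_comp_plus v a b : RInt (fun y => f (y + v)) a b = RInt f (a + v) (b + v).
Proof.
replace (a + v) with (1 * a + v) by ring; replace (b + v) with (1 * b + v) by ring.
rewrite <- RInt_comp_affine; apply RInt_ext; intros x _; rewrite !Rmult_1_l; reflexivity.
Qed.

Lemma RInt_translate_period a b : RInt f (a + T) (b + T) = RInt f a b.
Proof. rewrite <- RInt_comp_plus; apply RInt_ext; intros x _; apply f_periodic. Qed.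

Lemma RInt_shift_period h : RInt (fun w => f (w + h)) 0 T = RInt f 0 T.
Proof.
rewrite RInt_comp_plus, Rplus_0_l.
rewrite <- (RInt_Chasles f h T (T + h)), <- (RInt_Chasles f 0 h T) by apply ex_RInt_f.
rewrite <- (Rplus_0_l T) at 2; rewrite (Rplus_comm T h), RInt_translate_period.
apply Rplus_comm.
Qed.

Lemma RInt_dilate2_period : RInt (fun w => f (2 * w)) 0 T = RInt f 0 T.
Proof.
assert (Hdouble : 2 * RInt (fun w => f (2 * w)) 0 T = RInt f 0 (T + T)).
{ replace (RInt f 0 (T + T)) with (RInt f (2 * 0 + 0) (2 * T + 0)) by (f_equal; ring).
  rewrite <- RInt_comp_affine, <- (RInt_scal (V := R_CompleteNormedModule)).
  - apply RInt_ext; intros x _; rewrite Rplus_0_r; reflexivity.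
  - apply (ex_RInt_continuous (V := R_CompleteNormedModule)); intros x _.
    apply (continuous_comp (fun w => 2 * w) f); [|apply f_cont].
    apply (@ex_derive_continuous R_AbsRing R_NormedModule); auto_derive; auto. }
rewrite <- (RInt_Chasles f 0 T (T + T)) in Hdouble by apply ex_RInt_f.
rewrite <- (Rplus_0_l T) in Hdouble at 3; rewrite RInt_translate_period in Hdouble.
change (plus ?x ?y) with (x + y) in Hdouble; lra.
Qed.

End PeriodicIntegrals.

Definition poisson_den (b w : R) : R := 1 - 2 * b * cos w + b ^ 2.

Lemma poisson_den_bounds b w :
  (1 - Rabs b) ^ 2 <= poisson_den b w <= (1 + Rabs b) ^ 2.
Proof.
unfold poisson_den.
assert (Hcos : Rabs (cos w) <= 1) by (apply Rabs_le, COS_bound).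
assert (Hbcos : Rabs (b * cos w) <= Rabs b).
{ rewrite Rabs_mult. pose proof (Rabs_pos b). nra. }
pose proof (Rle_abs (b * cos w)). pose proof (Rle_abs (- (b * cos w))).
rewrite Rabs_Ropp in *.
replace (b ^ 2) with (Rabs b ^ 2) by (rewrite RPow_abs; apply Rabs_pos_eq; nra).
split; nra.
Qed.

Lemma poisson_den_pos b w : Rabs b < 1 -> 0 < poisson_den b w.
Proof. intros Hb. pose proof (poisson_den_bounds b w). nra. Qed.

Lemma poisson_den_periodic b w : poisson_den b (w + 2 * PI) = poisson_den b w.
Proof. unfold poisson_den. rewrite cos_plus, cos_2PI, sin_2PI. ring. Qed.

Lemma poisson_den_mul_shift_PI b w :
  poisson_den b w * poisson_den b (w + PI) = poisson_den (b ^ 2) (2 * w).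
Proof. unfold poisson_den. rewrite neg_cos, cos_2a_cos. ring. Qed.

Lemma continuous_inv_poisson_den b w : Rabs b < 1 ->
  continuous (fun w => / poisson_den b w) w.
Proof.
intros Hb. apply (@ex_derive_continuous R_AbsRing R_NormedModule).
pose proof (poisson_den_pos b w Hb). unfold poisson_den in *. auto_derive. lra.
Qed.

Lemma continuous_ln_poisson_den b w : Rabs b < 1 ->
  continuous (fun w => ln (poisson_den b w)) w.
Proof.
intros Hb. apply (@ex_derive_continuous R_AbsRing R_NormedModule).
pose proof (poisson_den_pos b w Hb). unfold poisson_den in *. auto_derive. lra.
Qed.

(* Half-angle substitution; the arctangent term vanishes at both ends of [0, 2 PI]. *)
Lemma is_derive_inv_poisson_den_primitive b w : Rabs b < 1 ->
  is_derive (fun w => (w + 2 * atan (b * sin w / (1 - b * cos w))) / (1 - b ^ 2)) w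
    (/ poisson_den b w).
Proof.
intros Hb. pose proof (poisson_den_pos b w Hb) as HD. unfold poisson_den in *.
assert (Hcos : Rabs (b * cos w) < 1).
{ rewrite Rabs_mult. assert (Rabs (cos w) <= 1) by (apply Rabs_le, COS_bound).
  pose proof (Rabs_pos b). nra. }
apply Rabs_def2 in Hcos.
assert (Hb2 : b ^ 2 < 1) by (rewrite <- (pow2_abs b); pose proof (Rabs_pos b); nra).
pose proof (sin2_cos2 w) as Hsc. unfold Rsqr in Hsc.
auto_derive; [lra|].
revert Hsc Hcos HD. generalize (cos w) (sin w). intros C S Hsc Hcos HD.
assert (Hatan : 1 + b * S * / (1 + - (b * C)) * (b * S * / (1 + - (b * C)) * 1)
                = (1 - 2 * b * C + b ^ 2) / ((1 - b * C) * (1 - b * C))).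
{ field_simplify_eq; [|lra]. replace (S ^ 2) with (1 - C * C) by lra. ring. }
rewrite Hatan. field_simplify_eq; [|repeat split; lra].
replace (S ^ 2) with (1 - C * C) by lra. ring.
Qed.

Lemma is_RInt_inv_poisson_den b : Rabs b < 1 ->
  is_RInt (fun w => / poisson_den b w) 0 (2 * PI) (2 * PI / (1 - b ^ 2)).
Proof.
intros Hb.
set (F := fun w => (w + 2 * atan (b * sin w / (1 - b * cos w))) / (1 - b ^ 2)).
replace (2 * PI / (1 - b ^ 2)) with (minus (F (2 * PI)) (F 0)).
- apply (is_RInt_derive F); intros x _.
  + apply is_derive_inv_poisson_den_primitive, Hb.
  + apply continuous_inv_poisson_den, Hb.
- unfold F, minus, plus, opp; simpl.
  rewrite sin_2PI, sin_0, !Rmult_0_r, !Rdiv_0_l, atan_0. field.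
  apply Rabs_def2 in Hb. nra.
Qed.

Definition ln_poisson_den_integral (b : R) : R :=
  RInt (fun w => ln (poisson_den b w)) 0 (2 * PI).

Lemma ln_poisson_den_integral_sqr b : Rabs b < 1 ->
  ln_poisson_den_integral (b ^ 2) = 2 * ln_poisson_den_integral b.
Proof.
intros Hb.
assert (Hb2 : Rabs (b ^ 2) < 1).
{ rewrite <- RPow_abs. pose proof (Rabs_pos b). nra. }
assert (Hcont := fun w => continuous_ln_poisson_den b w Hb).
unfold ln_poisson_den_integral.
rewrite <- (RInt_dilate2_period (fun w => ln (poisson_den (b ^ 2) w))).
2: intros w; apply continuous_ln_poisson_den, Hb2.
2: intros w; rewrite poisson_den_periodic; reflexivity.
rewrite (RInt_ext _ (fun w => ln (poisson_den b w) + ln (poisson_den b (w + PI)))).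
2:{ intros w _. rewrite <- poisson_den_mul_shift_PI.
    apply ln_mult; apply poisson_den_pos, Hb. }
rewrite (RInt_plus (V := R_CompleteNormedModule)).
- change (plus ?x ?y) with (x + y).
  rewrite (RInt_shift_period (fun w => ln (poisson_den b w))); [ring|exact Hcont|].
  intros w; rewrite poisson_den_periodic; reflexivity.
- apply (ex_RInt_continuous (V := R_CompleteNormedModule)); intros; apply Hcont.
- apply (ex_RInt_continuous (V := R_CompleteNormedModule)); intros w _.
  apply (continuous_comp (fun w => w + PI) (fun w => ln (poisson_den b w))); [|apply Hcont].
  apply (@ex_derive_continuous R_AbsRing R_NormedModule); auto_derive; auto.
Qed.

Lemma ln_poisson_den_integral_pow2 b n : Rabs b < 1 ->
  ln_poisson_den_integral (b ^ (2 ^ n)) = 2 ^ n * ln_poisson_den_integral b.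
Proof.
intros Hb. induction n as [|n IH].
- rewrite Nat.pow_0_r, pow_1, pow_O, Rmult_1_l. reflexivity.
- rewrite Nat.pow_succ_r', Nat.mul_comm, pow_mult, ln_poisson_den_integral_sqr, IH.
  + simpl. ring.
  + rewrite <- RPow_abs. apply pow_lt_1_compat. split; [apply Rabs_pos|exact Hb].
    apply Nat.neq_0_lt_0, Nat.pow_nonzero; discriminate.
Qed.

Lemma eq0_of_Rabs_le_div_pow2 x C : (forall n, Rabs x <= C / 2 ^ n) -> x = 0.
Proof.
intros Hle.
assert (Hlim : is_lim_seq (fun n => C / 2 ^ n) 0).
{ apply (is_lim_seq_ext (fun n => C * (/ 2) ^ n)).
  - intros n. rewrite pow_inv. reflexivity.
  - replace (Finite 0) with (Rbar_mult C 0) by (simpl; rewrite Rmult_0_r; reflexivity).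
    apply is_lim_seq_scal_l, is_lim_seq_geom. rewrite Rabs_pos_eq; lra. }
assert (Habs : Rabs x <= 0) by exact (is_lim_seq_le _ _ _ _ Hle (is_lim_seq_const _) Hlim).
pose proof (Rabs_pos x). apply Rabs_eq_0. lra.
Qed.

Lemma ln_poisson_den_integral_eq0 b : Rabs b < 1 -> ln_poisson_den_integral b = 0.
Proof.
intros Hb.
set (M := ln 4 - ln ((1 - Rabs b) ^ 2)).
assert (Hbound : forall c w, Rabs c <= Rabs b -> Rabs (ln (poisson_den c w)) <= M).
{ intros c w Hc. destruct (poisson_den_bounds c w) as [Hlo Hhi].
  pose proof (Rabs_pos c). pose proof (Rabs_pos b).
  assert (Hsq : 0 < (1 - Rabs b) ^ 2) by (apply pow_lt; lra).
  assert (Hlo' : ln ((1 - Rabs b) ^ 2) <= ln (poisson_den c w)) by (apply ln_le; nra).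
  assert (Hhi' : ln (poisson_den c w) <= ln 4) by (apply ln_le; nra).
  assert (ln ((1 - Rabs b) ^ 2) <= 0) by (rewrite <- ln_1; apply ln_le; nra).
  assert (0 <= ln 4) by (rewrite <- ln_1; apply ln_le; lra).
  unfold M. apply Rabs_le. lra. }
apply (eq0_of_Rabs_le_div_pow2 _ (2 * PI * M)); intros n.
assert (Hpow : Rabs (b ^ (2 ^ n)) <= Rabs b).
{ rewrite <- RPow_abs.
  destruct (2 ^ n)%nat as [|k] eqn:Hk; [now apply Nat.pow_nonzero in Hk|].
  pose proof (pow_incr (Rabs b) 1 k (conj (Rabs_pos b) (Rlt_le _ _ Hb))).
  rewrite pow1 in *. simpl. pose proof (Rabs_pos b). nra. }
assert (Hint : Rabs (ln_poisson_den_integral (b ^ (2 ^ n))) <= 2 * PI * M).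
{ replace (2 * PI * M) with ((2 * PI - 0) * M) by ring.
  pose proof PI_RGT_0. apply abs_RInt_le_const; [lra| |].
  - apply (ex_RInt_continuous (V := R_CompleteNormedModule)); intros w _.
    apply continuous_ln_poisson_den. lra.
  - intros w _. apply Hbound, Hpow. }
rewrite ln_poisson_den_integral_pow2, Rabs_mult, Rabs_pos_eq in Hint by (auto; apply pow_le; lra).
assert (0 < 2 ^ n) by (apply pow_lt; lra).
apply (Rmult_le_reg_l (2 ^ n)); [lra|]. field_simplify; lra.
Qed.

Lemma is_RInt_ln_poisson_den b : Rabs b < 1 ->
  is_RInt (fun w => ln (poisson_den b w)) 0 (2 * PI) 0.
Proof.
intros Hb.
assert (Hex : ex_RInt (fun w => ln (poisson_den b w)) 0 (2 * PI)).
{ apply (ex_RInt_continuous (V := R_CompleteNormedModule)); intros w _.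
  apply continuous_ln_poisson_den, Hb. }
pose proof (RInt_correct (V := R_CompleteNormedModule) _ _ _ Hex) as Hint.
fold (ln_poisson_den_integral b) in Hint. rewrite ln_poisson_den_integral_eq0 in Hint by exact Hb.
exact Hint.
Qed.

Section InnovationVariance.

Variable g : R.
Hypothesis g_range : 0 < g < 1.

Definition re_sum (a : R) : R := 1 + a ^ 2 + g * (1 - a ^ 2).

(* The normalised innovation variance r_e, the root c > 1 of c + a^2 / c = re_sum a. *)
Definition re_norm (a : R) : R := (re_sum a + sqrt (re_sum a ^ 2 - 4 * a ^ 2)) / 2.

Definition a2_of_re (r : R) : R := (1 + g - r) * r / (1 - (1 - g) * r).

(* K as a function of c = re_norm a; [a2_of_re] inverts a |-> c on [0, 1] in terms of a^2. *)
Definition K_of_re (r : R) : R := / 2 * (ln r - g * (r - 1) / (1 + g - (1 - g) * r)).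

(* The smaller root of (1 + g - (1 - g) r)^2 = 2 g^2 r, with rationalised numerator. *)
Definition re_opt : R := (1 + g) ^ 2 / (1 + sqrt (1 - (1 - g ^ 2) ^ 2)).

Lemma re_sum_ge a : 0 <= a <= 1 -> 2 * a <= re_sum a.
Proof.
intros Ha. assert (0 <= g * (1 - a ^ 2)) by (apply Rmult_le_pos; nra).
unfold re_sum. nra.
Qed.

Lemma re_norm_root a : 0 <= a <= 1 -> re_norm a ^ 2 - re_sum a * re_norm a + a ^ 2 = 0.
Proof.
intros Ha. pose proof (re_sum_ge a Ha).
assert (Hsqrt : sqrt (re_sum a ^ 2 - 4 * a ^ 2) ^ 2 = re_sum a ^ 2 - 4 * a ^ 2)
  by (apply pow2_sqrt; nra).
unfold re_norm. nra.
Qed.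

Lemma re_norm_1 : re_norm 1 = 1.
Proof.
unfold re_norm. replace (re_sum 1) with 2 by (unfold re_sum; ring).
replace (2 ^ 2 - 4 * 1 ^ 2) with 0 by ring. rewrite sqrt_0. field.
Qed.

Lemma re_norm_bounds a : 0 <= a < 1 -> 1 < re_norm a <= 1 + g.
Proof.
intros Ha. assert (Hq : 0 < g * (1 - a ^ 2)) by (apply Rmult_lt_0_compat; nra).
assert (Hd : 0 < re_sum a ^ 2 - 4 * a ^ 2).
{ assert (re_sum a - 2 * a > 0) by (unfold re_sum; nra).
  assert (re_sum a + 2 * a > 0) by (unfold re_sum; nra). nra. }
assert (Hsqrt : sqrt (re_sum a ^ 2 - 4 * a ^ 2) ^ 2 = re_sum a ^ 2 - 4 * a ^ 2)
  by (apply pow2_sqrt; lra).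
pose proof (sqrt_lt_R0 _ Hd).
unfold re_norm. set (U := sqrt _) in *. unfold re_sum in *. split.
- assert (U > 2 - (1 + a ^ 2 + g * (1 - a ^ 2))); [|lra].
  apply Rnot_le_lt; intro. nra.
- assert (U <= 2 * (1 + g) - (1 + a ^ 2 + g * (1 - a ^ 2))); [|lra].
  apply Rnot_lt_le; intro. assert (0 <= a ^ 2) by nra.
  assert (0 <= 2 * (1 + g) - (1 + a ^ 2 + g * (1 - a ^ 2))) by nra. nra.
Qed.

Lemma re_den_pos r : r <= 1 + g -> 0 < 1 - (1 - g) * r /\ 0 < 1 + g - (1 - g) * r.
Proof. intros Hr. split; nra. Qed.

Lemma a2_of_re_re_norm a : 0 <= a <= 1 -> a2_of_re (re_norm a) = a ^ 2.
Proof.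
intros Ha.
assert (Hr : re_norm a <= 1 + g).
{ destruct (Req_dec a 1) as [->|Ha1]; [rewrite re_norm_1; lra|].
  apply re_norm_bounds; lra. }
destruct (re_den_pos _ Hr) as [Hden _].
pose proof (re_norm_root a Ha) as Hroot. unfold re_sum in Hroot.
unfold a2_of_re. field_simplify_eq; lra.
Qed.

Lemma K_of_re_a2_of_re c : 1 < c <= 1 + g ->
  K_of_re c = / 2 * (ln c - g * (1 - a2_of_re c) / c / (1 - a2_of_re c / c ^ 2)).
Proof.
intros Hc. destruct (re_den_pos c ltac:(lra)) as [Hd HE].
assert (0 < (c - 1) * (1 + g - (1 - g) * c)) by (apply Rmult_lt_0_compat; lra).
unfold K_of_re, a2_of_re. field. repeat split; nra.
Qed.

Lemma a2_of_re_decreasing x y : 1 <= x -> x < y -> y <= 1 + g -> a2_of_re y < a2_of_re x.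
Proof.
intros Hx Hxy Hy. destruct (re_den_pos x ltac:(lra)) as [Hdx _].
destruct (re_den_pos y Hy) as [Hdy _].
unfold a2_of_re. apply (Rmult_lt_reg_r ((1 - (1 - g) * x) * (1 - (1 - g) * y))); [nra|].
field_simplify; [|lra|lra].
assert (x + y - (1 + g) - (1 - g) * x * y > 0).
{ assert ((x - 1) * (1 - (1 - g) * y) >= 0) by nra. nra. }
nra.
Qed.

Lemma a2_of_re_inj x y : 1 <= x <= 1 + g -> 1 <= y <= 1 + g ->
  a2_of_re x = a2_of_re y -> x = y.
Proof.
intros Hx Hy E. destruct (Rtotal_order x y) as [H|[H|H]]; auto.
- assert (a2_of_re y < a2_of_re x) by (apply a2_of_re_decreasing; lra). lra.
- assert (a2_of_re x < a2_of_re y) by (apply a2_of_re_decreasing; lra). lra.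
Qed.

Lemma a2_of_re_bounds r : 1 < r < 1 + g -> 0 < a2_of_re r < 1.
Proof.
intros Hr. destruct (re_den_pos r ltac:(lra)) as [Hd _].
unfold a2_of_re. split.
- apply Rdiv_lt_0_compat; nra.
- apply (Rmult_lt_reg_r (1 - (1 - g) * r)); [lra|].
  unfold Rdiv. rewrite Rmult_assoc, Rinv_l by lra. nra.
Qed.

Lemma re_norm_sqrt_a2_of_re r : 1 < r < 1 + g -> re_norm (sqrt (a2_of_re r)) = r.
Proof.
intros Hr. destruct (a2_of_re_bounds r Hr) as [H0 H1].
assert (Ha : 0 <= sqrt (a2_of_re r) < 1).
{ split; [apply sqrt_pos|]. rewrite <- sqrt_1. apply sqrt_lt_1; lra. }
apply a2_of_re_inj; [pose proof (re_norm_bounds _ Ha); lra|lra|].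
rewrite a2_of_re_re_norm by lra. apply pow2_sqrt. lra.
Qed.

Lemma re_opt_spec :
  1 < re_opt < 1 + g /\ (1 + g - (1 - g) * re_opt) ^ 2 = 2 * g ^ 2 * re_opt.
Proof.
assert (Hg2 : 0 < 1 - g ^ 2 < 1) by (split; nra).
assert (Hd : 0 < 1 - (1 - g ^ 2) ^ 2) by nra.
assert (HW : sqrt (1 - (1 - g ^ 2) ^ 2) ^ 2 = 1 - (1 - g ^ 2) ^ 2) by (apply pow2_sqrt; lra).
pose proof (sqrt_lt_R0 _ Hd).
unfold re_opt. set (W := sqrt _) in *.
assert (HWlo : g < W) by (apply Rnot_le_lt; intro; nra).
assert (HWhi : W < g * (2 + g)) by (apply Rnot_le_lt; intro; nra).
split; [split|].
- apply (Rmult_lt_reg_r (1 + W)); [lra|]. unfold Rdiv. rewrite Rmult_assoc, Rinv_l by lra. nra.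
- apply (Rmult_lt_reg_r (1 + W)); [lra|]. unfold Rdiv. rewrite Rmult_assoc, Rinv_l by lra. nra.
- field_simplify_eq; [|lra].
  replace (W ^ 4) with ((W ^ 2) ^ 2) by ring. replace (W ^ 3) with (W ^ 2 * W) by ring.
  rewrite HW. ring.
Qed.

Lemma re_crit_sign c : 1 <= c <= 1 + g ->
  (c < re_opt -> 0 < (1 + g - (1 - g) * c) ^ 2 - 2 * g ^ 2 * c) /\
  (re_opt < c -> (1 + g - (1 - g) * c) ^ 2 - 2 * g ^ 2 * c < 0).
Proof.
intros Hc. destruct re_opt_spec as [[Hlo Hhi] Hcrit].
destruct (re_den_pos c ltac:(lra)) as [_ HEc].
destruct (re_den_pos re_opt ltac:(lra)) as [_ HEm].
split; intros Hlt.
- assert ((1 - g) * c < (1 - g) * re_opt) by (apply Rmult_lt_compat_l; lra).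
  assert (2 * g ^ 2 * c < 2 * g ^ 2 * re_opt) by (apply Rmult_lt_compat_l; nra). nra.
- assert ((1 - g) * re_opt < (1 - g) * c) by (apply Rmult_lt_compat_l; lra).
  assert (2 * g ^ 2 * re_opt < 2 * g ^ 2 * c) by (apply Rmult_lt_compat_l; nra). nra.
Qed.

Lemma is_derive_K_of_re r : 1 <= r <= 1 + g ->
  is_derive K_of_re r
    (((1 + g - (1 - g) * r) ^ 2 - 2 * g ^ 2 * r) / (2 * r * (1 + g - (1 - g) * r) ^ 2)).
Proof.
intros Hr. destruct (re_den_pos r ltac:(lra)) as [_ HE].
unfold K_of_re. auto_derive; [repeat split; lra|]. field. split; lra.
Qed.

Lemma K_of_re_lt_max r : 1 <= r <= 1 + g -> r <> re_opt -> K_of_re r < K_of_re re_opt.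
Proof.
intros Hr Hne. destruct re_opt_spec as [[Hlo Hhi] _].
set (dK := fun c =>
  ((1 + g - (1 - g) * c) ^ 2 - 2 * g ^ 2 * c) / (2 * c * (1 + g - (1 - g) * c) ^ 2)).
assert (Hderiv : forall c, 1 <= c <= 1 + g -> derivable_pt_lim K_of_re c (dK c)).
{ intros c Hc. apply is_derive_Reals, is_derive_K_of_re, Hc. }
assert (Hden : forall c, 1 <= c <= 1 + g -> 0 < 2 * c * (1 + g - (1 - g) * c) ^ 2).
{ intros c Hc. destruct (re_den_pos c ltac:(lra)) as [_ HE].
  apply Rmult_lt_0_compat; [lra|apply pow_lt; lra]. }
destruct (Rtotal_order r re_opt) as [Hlt|[Heq|Hgt]]; [|contradiction|].
- destruct (MVT_cor2 K_of_re dK r re_opt Hlt) as [c [Hmvt Hc]].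
  { intros c Hc. apply Hderiv. lra. }
  destruct (re_crit_sign c ltac:(lra)) as [Hsign _].
  assert (0 < dK c) by (apply Rdiv_lt_0_compat; [apply Hsign; lra|apply Hden; lra]).
  nra.
- destruct (MVT_cor2 K_of_re dK re_opt r Hgt) as [c [Hmvt Hc]].
  { intros c Hc. apply Hderiv. lra. }
  destruct (re_crit_sign c ltac:(lra)) as [_ Hsign].
  assert (0 < - dK c).
  { unfold dK. rewrite <- Rdiv_opp_l.
    apply Rdiv_lt_0_compat; [pose proof (Hsign ltac:(lra)); lra|apply Hden; lra]. }
  nra.
Qed.

Lemma a2_of_re_re_opt_gt : g <= 1 / 2 -> 1 - 4 * g < a2_of_re re_opt.
Proof.
intros Hg. destruct re_opt_spec as [[Hlo Hhi] Hcrit].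
destruct (re_den_pos re_opt ltac:(lra)) as [Hd HE].
set (r := re_opt) in *. set (E := 1 + g - (1 - g) * r) in *.
assert (H1 : 1 - a2_of_re r = (r - 1) ^ 2 / (1 - (1 - g) * r))
  by (unfold a2_of_re; field; lra).
(* E = g sqrt (2 r) > 7/5 g, hence r - 1 < 6/5 g and 1 - a2_of_re r < (36/25 g^2) / (2/5 g). *)
assert (HE1 : E > 7 / 5 * g) by (apply Rnot_le_lt; intro; nra).
assert (Hden : 1 - (1 - g) * r = E - g) by (unfold E; ring).
assert (Hx : (1 - g) * (r - 1) = 2 * g - E) by (unfold E; ring).
assert (Hx2 : r - 1 < 6 / 5 * g) by nra.
assert (1 - a2_of_re r < 4 * g); [|lra].
rewrite H1. apply (Rmult_lt_reg_r (1 - (1 - g) * r)); [lra|].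
unfold Rdiv. rewrite Rmult_assoc, Rinv_l by lra. rewrite Hden. nra.
Qed.

Definition a_opt : R := sqrt (a2_of_re re_opt).

Lemma a_opt_sqr : a_opt ^ 2 = a2_of_re re_opt.
Proof.
destruct re_opt_spec as [Hr _]. destruct (a2_of_re_bounds _ Hr).
apply pow2_sqrt. lra.
Qed.

Lemma a_opt_range : 0 < a_opt < 1.
Proof.
destruct re_opt_spec as [Hr _]. destruct (a2_of_re_bounds _ Hr).
unfold a_opt. split; [apply sqrt_lt_R0; lra|]. rewrite <- sqrt_1. apply sqrt_lt_1; lra.
Qed.

Lemma re_norm_a_opt : re_norm a_opt = re_opt.
Proof. apply re_norm_sqrt_a2_of_re, re_opt_spec. Qed.

Lemma a_opt_gt : g <= 1 / 2 -> 1 - 4 * g < a_opt.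
Proof.
intros Hg. pose proof (a2_of_re_re_opt_gt Hg). pose proof a_opt_range. pose proof a_opt_sqr. nra.
Qed.

(* Multiplied out, the optimality equation is the stationarity condition of [K_of_re]. *)
Lemma opt_eq_a2_of_re r : 1 < r < 1 + g ->
  (1 + a2_of_re r + g * (1 - a2_of_re r)) ^ 2 - 2 * (r + a2_of_re r ^ 2 / r)
  = (r - 1) ^ 2 * ((1 + g - (1 - g) * r) ^ 2 - 2 * g ^ 2 * r) / (1 - (1 - g) * r) ^ 2.
Proof.
intros Hr. destruct (re_den_pos r ltac:(lra)) as [Hd _].
unfold a2_of_re. field. split; lra.
Qed.

End InnovationVariance.

Lemma re_v_eq Pi0 sigma2 a : 0 < sigma2 -> re_v Pi0 sigma2 a = re_norm (Pi0 / sigma2) a.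
Proof.
intros Hs. unfold re_v, Re_v, Pv, Qv, re_norm, re_sum.
set (g := Pi0 / sigma2).
replace Pi0 with (g * sigma2) by (unfold g; field; lra).
replace ((sigma2 * (1 - a ^ 2) - g * sigma2 * (1 - a ^ 2)) ^ 2 + 4 * sigma2 * (g * sigma2 * (1 - a ^ 2)))
  with (sigma2 ^ 2 * ((1 + a ^ 2 + g * (1 - a ^ 2)) ^ 2 - 4 * a ^ 2)) by ring.
rewrite sqrt_mult_alt, sqrt_pow2 by nra.
field. lra.
Qed.

Lemma poisson_den_add_factor a c k w : c <> 0 -> c ^ 2 - (1 + a ^ 2 + k) * c + a ^ 2 = 0 ->
  poisson_den a w + k = c * poisson_den (a / c) w.
Proof. intros Hc Hroot. unfold poisson_den. field_simplify_eq; [|exact Hc]. nra. Qed.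

Lemma Sy_1 Pi0 sigma2 w : Sy Pi0 sigma2 1 w = sigma2.
Proof. unfold Sy. unfold Rdiv. ring. Qed.

Lemma KL_gauss_diag s : s <> 0 -> KL_gauss s s = 0.
Proof. intros Hs. unfold KL_gauss. rewrite Rdiv_diag, ln_1 by exact Hs. ring. Qed.

Lemma Rabs_div_lt_1 a c : 0 <= a < 1 -> 1 < c -> Rabs (a / c) < 1.
Proof.
intros Ha Hc. rewrite Rabs_pos_eq by (apply Rdiv_le_0_compat; lra).
apply Rmult_lt_reg_r with c; [lra|]. unfold Rdiv. rewrite Rmult_assoc, Rinv_l; lra.
Qed.

Section ErrorExponent.

Variables Pi0 sigma2 : R.
Hypothesis Pi0_pos : 0 < Pi0.
Hypothesis sigma2_pos : 0 < sigma2.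
Hypothesis snr_lt_1 : Pi0 / sigma2 < 1.

Local Notation g := (Pi0 / sigma2).

Let g_range : 0 < g < 1.
Proof. split; [apply Rdiv_lt_0_compat|]; assumption. Qed.

Lemma KL_gauss_Sy a c w : 0 <= a < 1 -> 1 < c -> c ^ 2 - re_sum g a * c + a ^ 2 = 0 ->
  KL_gauss sigma2 (Sy Pi0 sigma2 a w) =
  / 2 * (- (g * (1 - a ^ 2) / c) * / poisson_den (a / c) w
         + ln c + ln (poisson_den (a / c) w) - ln (poisson_den a w)).
Proof.
intros Ha Hc Hroot.
assert (Hac : Rabs (a / c) < 1) by (apply Rabs_div_lt_1; lra).
assert (Ha' : Rabs a < 1) by (rewrite Rabs_pos_eq; lra).
pose proof (poisson_den_pos a w Ha'). pose proof (poisson_den_pos (a / c) w Hac).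
assert (Hfac : poisson_den a w + g * (1 - a ^ 2) = c * poisson_den (a / c) w).
{ apply poisson_den_add_factor; [lra|]. unfold re_sum in Hroot. lra. }
assert (Hratio : sigma2 / Sy Pi0 sigma2 a w = poisson_den a w / (c * poisson_den (a / c) w)).
{ unfold Sy. fold (poisson_den a w).
  replace (sigma2 + Pi0 * (1 - a ^ 2) / poisson_den a w)
    with (sigma2 * (poisson_den a w + g * (1 - a ^ 2)) / poisson_den a w) by (field; lra).
  rewrite Hfac. field. repeat split; try lra. }
unfold KL_gauss. rewrite Hratio.
rewrite ln_div, ln_mult by (try apply Rmult_lt_0_compat; lra).
replace (poisson_den a w) with (c * poisson_den (a / c) w - g * (1 - a ^ 2)) at 1 by lra.
field. lra.
Qed.

Lemma Kexp_re_norm a : 0 <= a <= 1 -> Kexp Pi0 sigma2 a = K_of_re g (re_norm g a).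
Proof.
intros Ha. destruct (Req_dec a 1) as [->|Ha1].
{ rewrite re_norm_1. unfold Kexp, K_of_re.
  rewrite (RInt_ext _ (fun _ => 0)), RInt_const.
  - change (scal ?x ?y) with (x * y). rewrite ln_1. unfold Rdiv. ring.
  - intros w _. rewrite Sy_1. apply KL_gauss_diag. lra. }
assert (Ha' : 0 <= a < 1) by lra.
pose proof (re_norm_bounds g g_range a Ha') as Hc.
set (c := re_norm g a) in *.
assert (Hac : Rabs (a / c) < 1) by (apply Rabs_div_lt_1; lra).
assert (Hint : is_RInt (fun w => KL_gauss sigma2 (Sy Pi0 sigma2 a w)) 0 (2 * PI)
  (/ 2 * (- (g * (1 - a ^ 2) / c) * (2 * PI / (1 - (a / c) ^ 2)) + (2 * PI - 0) * ln c + 0 - 0))).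
{ apply (is_RInt_ext (fun w => / 2 * (- (g * (1 - a ^ 2) / c) * / poisson_den (a / c) w
         + ln c + ln (poisson_den (a / c) w) - ln (poisson_den a w)))).
  { intros w _. symmetry. apply KL_gauss_Sy; [exact Ha'|lra|].
    apply re_norm_root; [exact g_range|lra]. }
  apply (is_RInt_scal (V := R_NormedModule)).
  apply (is_RInt_minus (V := R_NormedModule)); [|apply is_RInt_ln_poisson_den; rewrite Rabs_pos_eq; lra].
  apply (is_RInt_plus (V := R_NormedModule)); [|apply is_RInt_ln_poisson_den, Hac].
  apply (is_RInt_plus (V := R_NormedModule)); [|apply (is_RInt_const (V := R_NormedModule))].
  apply (is_RInt_scal (V := R_NormedModule)), is_RInt_inv_poisson_den, Hac. }
unfold Kexp. rewrite (is_RInt_unique _ _ _ _ Hint).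
assert (Ha2 : a ^ 2 = a2_of_re g c) by (unfold c; rewrite a2_of_re_re_norm; auto; lra).
rewrite K_of_re_a2_of_re, <- Ha2 by (auto; lra).
pose proof PI_RGT_0. field. repeat split; nra.
Qed.

Lemma Kexp_lt_a_opt a : 0 <= a <= 1 -> a <> a_opt g -> Kexp Pi0 sigma2 a < Kexp Pi0 sigma2 (a_opt g).
Proof.
intros Ha Hne. destruct (a_opt_range g g_range) as [Hlo Hhi].
rewrite !Kexp_re_norm, re_norm_a_opt by (auto; lra).
apply K_of_re_lt_max; [exact g_range| |].
- destruct (Req_dec a 1) as [->|Ha1]; [rewrite re_norm_1; lra|].
  pose proof (re_norm_bounds g g_range a ltac:(lra)). lra.
- intros Heq. apply Hne.
  assert (Hsq : a ^ 2 = a_opt g ^ 2).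
  { rewrite a_opt_sqr, <- Heq, a2_of_re_re_norm; auto. }
  nra.
Qed.

Lemma Kexp_le_a_opt a : 0 <= a <= 1 -> Kexp Pi0 sigma2 a <= Kexp Pi0 sigma2 (a_opt g).
Proof.
intros Ha. destruct (Req_dec a (a_opt g)) as [->|Hne]; [lra|].
apply Rlt_le, Kexp_lt_a_opt; assumption.
Qed.

Lemma Kexp_argmax a : 0 <= a <= 1 ->
  (forall b, 0 <= b <= 1 -> Kexp Pi0 sigma2 b <= Kexp Pi0 sigma2 a) -> a = a_opt g.
Proof.
intros Ha Hmax. destruct (Req_dec a (a_opt g)) as [|Hne]; [assumption|].
pose proof (Kexp_lt_a_opt a Ha Hne). pose proof (a_opt_range g g_range).
pose proof (Hmax (a_opt g) ltac:(lra)). lra.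
Qed.

Lemma opt_eq_lhs_a_opt : opt_eq_lhs Pi0 sigma2 (a_opt g) = 0.
Proof.
destruct (re_opt_spec g g_range) as [Hr Hcrit].
unfold opt_eq_lhs. rewrite re_v_eq, re_norm_a_opt by auto.
replace (a_opt g ^ 4) with ((a_opt g ^ 2) ^ 2) by ring.
rewrite a_opt_sqr, opt_eq_a2_of_re, Hcrit by auto.
unfold Rdiv. ring.
Qed.

End ErrorExponent.

Lemma optimal_spacing (K : R -> R) am : 0 < am < 1 ->
  (forall a, 0 <= a <= 1 -> K a <= K am) ->
  forall A, 0 < A ->
    0 < - ln am / A /\
    (forall Delta, 0 <= Delta -> K (exp (- A * Delta)) <= K (exp (- A * (- ln am / A)))).
Proof.
intros Ham Hmax A HA.
assert (Hln : ln am < 0) by (rewrite <- ln_1; apply ln_increasing; lra).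
split; [apply Rdiv_lt_0_compat; lra|].
intros Delta HDelta.
replace (- A * (- ln am / A)) with (ln am) by (field; lra).
rewrite exp_ln by lra. apply Hmax.
split; [apply Rlt_le, exp_pos|]. rewrite <- exp_0.
assert (Hexp : - A * Delta <= 0) by nra.
destruct Hexp as [Hlt|Heq]; [apply Rlt_le, exp_increasing, Hlt|rewrite Heq; lra].
Qed.

Theorem theorem4 :
  (forall Pi0 sigma2 : R, 0 < Pi0 -> 0 < sigma2 -> Pi0 / sigma2 < 1 ->
     exists am : R,
       0 < am < 1 /\
       (forall a : R, 0 <= a <= 1 -> Kexp Pi0 sigma2 a <= Kexp Pi0 sigma2 am) /\
       opt_eq_lhs Pi0 sigma2 am = 0 /\
       (forall A : R, 0 < A ->
          0 < - ln am / A /\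
          (forall Delta : R, 0 <= Delta ->
             Kexp Pi0 sigma2 (exp (- A * Delta))
             <= Kexp Pi0 sigma2 (exp (- A * (- ln am / A))))))
  /\
  (forall eps : R, 0 < eps ->
     exists delta : R, 0 < delta /\
       forall Pi0 sigma2 : R, 0 < Pi0 -> 0 < sigma2 -> Pi0 / sigma2 < delta ->
         forall am : R, 0 <= am <= 1 ->
           (forall a : R, 0 <= a <= 1 -> Kexp Pi0 sigma2 a <= Kexp Pi0 sigma2 am) ->
           1 - eps < am).
Proof.
split.
- intros Pi0 sigma2 HPi0 Hs Hsnr.
  assert (Hg : 0 < Pi0 / sigma2 < 1) by (split; [apply Rdiv_lt_0_compat|]; assumption).
  pose proof (Kexp_le_a_opt Pi0 sigma2 HPi0 Hs Hsnr) as Hmax.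
  exists (a_opt (Pi0 / sigma2)).
  split; [apply a_opt_range, Hg|].
  split; [exact Hmax|].
  split; [apply opt_eq_lhs_a_opt; assumption|].
  apply optimal_spacing; [apply a_opt_range, Hg|exact Hmax].
- intros eps Heps. exists (Rmin (1 / 2) (eps / 4)).
  split; [apply Rmin_glb_lt; lra|].
  intros Pi0 sigma2 HPi0 Hs Hsnr am Ham Hmax.
  pose proof (Rmin_l (1 / 2) (eps / 4)). pose proof (Rmin_r (1 / 2) (eps / 4)).
  assert (Hg : 0 < Pi0 / sigma2 < 1) by (split; [apply Rdiv_lt_0_compat|]; lra).
  rewrite (Kexp_argmax Pi0 sigma2 HPi0 Hs ltac:(lra) am Ham Hmax).
  pose proof (a_opt_gt (Pi0 / sigma2) Hg ltac:(lra)). lra.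
Qed.
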